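(* Let $\mathcal{H}$ be a complex separable Hilbert space and $\mathcal{E}(\mathcal{H})$ its set of effects. The function $\mathcal{S}_0:\mathcal{E}(\mathcal{H})\to\mathbb{R}$ defined by $$\mathcal{S}_0(A):=\|A\|\,\|I-A\|-\|A(I-A)\|$$ is a sharpness measure.
   Context: An effect is a selfadjoint bounded operator $A$ on $\mathcal{H}$ with $\mathbb{O}\le A\le I$; $\mathcal{E}(\mathcal{H})$ denotes the set of effects and $A':=I-A$. An effect is trivial if $A=\lambda I$ for some $\lambda\in[0,1]$; a nontrivial projection is a projection $P=P^2=P^*$ with $P\neq \mathbb{O},I$. Norms are operator norms. A function $\mathcal{S}:\mathcal{E}(\mathcal{H})\to\mathbb{R}$ is called a sharpness measure if: (S1) $0\le\mathcal{S}(A)\le1$ for all effects $A$; (S2) $\mathcal{S}(A)=0$ iff $A$ is a trivial effect; (S3) $\mathcal{S}(A)=1$ iff $A$ is a nontrivial projection; (S4) $\mathcal{S}(A')=\mathcal{S}(A)$; (S5) $\mathcal{S}(CAC^{-1})=\mathcal{S}(A)$ for every invertible bounded operator $C$ such that $CAC^{-1}$ is an effect; (S6) $A\mapsto\mathcal{S}(A)$ is continuous with respect to the operator norm. *)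

From HB Require Import structures.
From mathcomp Require Import all_boot all_order all_algebra.
From mathcomp Require Import complex.
From mathcomp Require Import classical_sets reals.

Set Implicit Arguments.
Unset Strict Implicit.
Unset Printing Implicit Defensive.

Import Order.TTheory GRing.Theory Num.Theory.
Local Open Scope ring_scope.
Local Open Scope classical_set_scope.

Section Hilbert.
Variable R : realType.
Variable V : lmodType (R[i]).
Variable ip : V -> V -> R[i].

Definition is_inner_product : Prop :=
  [/\ (forall (a : R[i]) (x y z : V), ip (a *: x + y) z = a * ip x z + ip y z),
      (forall x y : V, ip x y = conjc (ip y x)),
      (forall x : V, 0 <= ip x x) &
      (forall x : V, ip x x = 0 -> x = 0)].

Definition hnorm (x : V) : R := Num.sqrt (complex.Re (ip x x)).

Definition hcomplete : Prop :=
  forall u : nat -> V,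
    (forall e : R, 0 < e -> exists N : nat, forall m n : nat, (N <= m)%N -> (N <= n)%N ->
       hnorm (u m - u n) < e) ->
    exists l : V, forall e : R, 0 < e -> exists N : nat, forall n : nat, (N <= n)%N ->
       hnorm (u n - l) < e.

Definition hseparable : Prop :=
  exists d : nat -> V, forall (x : V) (e : R), 0 < e -> exists n : nat, hnorm (x - d n) < e.

Definition is_linear_op (T : V -> V) : Prop :=
  forall (a : R[i]) (x y : V), T (a *: x + y) = a *: T x + T y.

Definition bounded_op (T : V -> V) : Prop :=
  is_linear_op T /\ exists M : R, forall x : V, hnorm (T x) <= M * hnorm x.

Definition opnorm (T : V -> V) : R :=
  sup [set hnorm (T x) | x in [set x : V | hnorm x <= 1]].

Definition selfadjoint (T : V -> V) : Prop :=
  forall x y : V, ip (T x) y = ip x (T y).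

(* effects: selfadjoint bounded operators with 0 <= A <= I;
   the order on R[i] is the partial order of complex numbers (0 <= z iff z is real >= 0) *)
Definition effect (A : V -> V) : Prop :=
  [/\ bounded_op A, selfadjoint A &
      forall x : V, 0 <= ip (A x) x /\ ip (A x) x <= ip x x].

Definition idop : V -> V := fun x => x.
Definition zeroop : V -> V := fun _ => 0.
Definition complop (A : V -> V) : V -> V := fun x => x - A x.

Definition trivial_effect (A : V -> V) : Prop :=
  exists l : R, 0 <= l <= 1 /\ A = (fun x => (l%:C)%C *: x).

Definition nontrivial_projection (P : V -> V) : Prop :=
  [/\ bounded_op P, (forall x, P (P x) = P x), selfadjoint P, P <> zeroop & P <> idop].

Definition invertible_op (C : V -> V) (D : V -> V) : Prop :=
  [/\ bounded_op C, bounded_op D, (forall x, C (D x) = x) & (forall x, D (C x) = x)].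

(* sharpness measure: axioms (S1)-(S6), for a function defined (at least) on effects *)
Definition sharpness_measure (S : (V -> V) -> R) : Prop :=
  (forall A, effect A -> 0 <= S A <= 1) /\
  (forall A, effect A -> (S A = 0 <-> trivial_effect A)) /\
  (forall A, effect A -> (S A = 1 <-> nontrivial_projection A)) /\
  (forall A, effect A -> S (complop A) = S A) /\
  (forall A C D, effect A -> invertible_op C D ->
                  effect (fun x => C (A (D x))) -> S (fun x => C (A (D x))) = S A) /\
      (forall A, effect A -> forall e : R, 0 < e -> exists d : R, 0 < d /\
                  forall B, effect B -> opnorm (fun x => B x - A x) < d ->
                    `|S B - S A| < e).

Definition S0 (A : V -> V) : R :=
  opnorm A * opnorm (complop A) - opnorm (fun x => A (complop A x)).

End Hilbert.

(* Write M = ||A||, m = ||I - A|| and P = ||A(I - A)||.  For an effect these lie in [0, 1]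
   and P <= M m, which gives (S1); (S4) is the symmetry A <-> I - A, and (S6) holds because
   A |-> S0 A is 5-Lipschitz for the operator norm.
   (S3): S0 A = 1 forces P = 0 and M = m = 1, i.e. A^2 = A with A <> 0, I.
   (S2): the positive operator A(I - A) has <A(I - A)x, x> <= M m / (M + m) ||x||^2, so
   S0 A = 0 forces M + m <= 1; then (1 - m) ||x||^2 <= <Ax, x> <= M ||x||^2 squeezes
   <Ax, x> = M ||x||^2, i.e. A = M I.
   (S5): for selfadjoint T, ||Tx||^(2^k) <= ||T^(2^k) x|| ||x||^(2^k - 1), so ||T|| is
   determined by the growth of the powers of T and is invariant under similarity;
   A, I - A and A(I - A) are selfadjoint. *)

From HB Require Import structures.
From mathcomp Require Import all_boot all_order all_algebra.
From mathcomp Require Import complex.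
From mathcomp Require Import boolp classical_sets reals.
From mathcomp Require Import ring lra zify.

Set Implicit Arguments.
Unset Strict Implicit.
Unset Printing Implicit Defensive.

Import Order.TTheory GRing.Theory Num.Theory.
Local Open Scope ring_scope.
Local Open Scope complex_scope.

Lemma discriminant_le (R : realFieldType) (a b c : R) : 0 <= c ->
  (forall t, 0 <= a + 2 * b * t + c * t ^+ 2) -> b ^+ 2 <= a * c.
Proof.
move=> c_ge0 pos; have [c_gt0|] := ltrP 0 c.
  have := mulr_ge0 (ltW c_gt0) (pos (- b / c)).
  have -> : c * (a + 2 * b * (- b / c) + c * (- b / c) ^+ 2) = a * c - b ^+ 2.
    by field; rewrite gt_eqF.
  by rewrite subr_ge0.
move=> c_le0; have c0 : c = 0 by apply/eqP; rewrite eq_le c_le0 c_ge0.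
rewrite {}c0 in pos *.
have [-> | b_neq0] := eqVneq b 0; first by rewrite expr0n mulr0.
have := pos (- (a + 1) / (2 * b)).
have -> : a + 2 * b * (- (a + 1) / (2 * b)) + 0 * (- (a + 1) / (2 * b)) ^+ 2 = -1.
  by field.
lra.
Qed.

(* With (a, b, s) = (<Ax,x>, ||Ax||^2, ||x||^2), M = ||A|| and m = ||I - A|| for an effect A,
   this bounds the quadratic form of A(I - A) by M m / (M + m). *)
Lemma harmonic_form_bound (R : realFieldType) (M m a b s : R) :
  0 <= M -> 0 <= m -> 0 <= a -> 0 <= b -> 0 <= s ->
  a <= M * s -> s - a <= m * s -> a ^+ 2 <= b * s -> b <= a ->
  (a - b) * (M + m) <= M * m * s.
Proof.
move=> M_ge0 m_ge0 a_ge0 b_ge0 s_ge0 aM am ab ba.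
have [s0 | s_neq0] := eqVneq s 0.
  have a0 : a = 0 by apply/eqP; rewrite eq_le a_ge0 andbT -(mulr0 M) -s0.
  have b0 : b = 0 by apply/eqP; rewrite eq_le b_ge0 andbT -a0.
  by rewrite a0 b0 s0 subrr !mul0r mulr0.
have s_gt0 : 0 < s by rewrite lt_def s_neq0.
rewrite -subr_ge0 -(pmulr_rge0 _ (exprn_gt0 2 s_gt0)).
have -> : s ^+ 2 * (M * m * s - (a - b) * (M + m)) =
    s * (M * s - a) * (m * s - (s - a)) + (M * s - a) * (s - a) ^+ 2 +
    (m * s - (s - a)) * a ^+ 2 + s * (b * s - a ^+ 2) * (M + m) by ring.
have P1 : 0 <= s * (M * s - a) * (m * s - (s - a)) by rewrite !mulr_ge0 // ?subr_ge0.
have P2 : 0 <= (M * s - a) * (s - a) ^+ 2 by rewrite mulr_ge0 ?sqr_ge0 // ?subr_ge0.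
have P3 : 0 <= (m * s - (s - a)) * a ^+ 2 by rewrite mulr_ge0 ?sqr_ge0 // ?subr_ge0.
have P4 : 0 <= s * (b * s - a ^+ 2) * (M + m).
  by rewrite mulr_ge0 ?addr_ge0 // mulr_ge0 // subr_ge0.
by rewrite !addr_ge0.
Qed.

Lemma bernoulli_ineq (R : realDomainType) (h : R) n : 0 <= h -> 1 + n%:R * h <= (1 + h) ^+ n.
Proof.
move=> h_ge0; elim: n => [|n IHn]; first by rewrite mul0r addr0 expr0.
rewrite exprS -natr1; have := mulr_ge0 h_ge0 (ler0n _ n).
have : 0 <= 1 + n%:R * h by rewrite addr_ge0 ?mulr_ge0 ?ler0n.
nra.
Qed.

Lemma le_of_pow2_le (R : archiRealFieldType) (r q K : R) : 0 <= r -> 0 <= q ->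
  (forall k, r ^+ (2 ^ k) <= K * q ^+ (2 ^ k)) -> r <= q.
Proof.
move=> r_ge0 q_ge0 rqK; rewrite leNgt; apply/negP => q_lt_r.
have r_gt0 : 0 < r by apply: le_lt_trans q_lt_r.
have [q0 | q_neq0] := eqVneq q 0.
  by have := rqK 0%N; rewrite expn0 !expr1 q0 mulr0 leNgt r_gt0.
have q_gt0 : 0 < q by rewrite lt_def q_neq0 q_ge0.
set h := r / q - 1.
have h_gt0 : 0 < h by rewrite subr_gt0 ltr_pdivlMr // mul1r.
have powK k : (1 + h) ^+ (2 ^ k) <= K.
  have := rqK k; rewrite -(divfK q_neq0 r) exprMn ler_pM2r ?exprn_gt0 //.
  by rewrite /h addrC subrK.
set m := Num.Def.archi_bound (`|K| / h).
have Km : `|K| / h < m%:R by apply: archi_boundP; rewrite divr_ge0 ?normr_ge0 ?ltW.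
have m_lt : (m%:R : R) < (2 ^ m)%:R by rewrite ltr_nat ltn_expl.
have := bernoulli_ineq (2 ^ m) (ltW h_gt0); have := powK m.
have : `|K| < m%:R * h by rewrite -ltr_pdivrMr.
by have := ler_norm K; have := ler0n R m; nra.
Qed.

Lemma iter_conj (X : Type) (C D T T' : X -> X) : cancel C D -> cancel D C ->
  (forall x, T' x = C (T (D x))) -> forall n x, iter n T' x = C (iter n T (D x)).
Proof.
move=> CK DK T'E n x; elim: n => [|n IHn] /=; first by rewrite DK.
by rewrite IHn T'E CK.
Qed.

Section RealForm.
Variables (R : rcfType) (V : lmodType R[i]) (g : V -> V -> R).
Hypothesis glin : forall (c : R) x y z, g (c%:C *: x + y) z = c * g x z + g y z.
Hypothesis gsym : forall x y, g x y = g y x.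

Lemma form0l z : g 0 z = 0.
Proof. by have := glin (-1) 0 0 z; rewrite scaler0 addr0 mulN1r addNr. Qed.

Lemma formZl c x z : g (c%:C *: x) z = c * g x z.
Proof. by have := glin c x 0 z; rewrite addr0 form0l addr0. Qed.

Lemma formDl x y z : g (x + y) z = g x z + g y z.
Proof. by have := glin 1 x y z; rewrite rmorph1 scale1r mul1r. Qed.

Lemma formNl x z : g (- x) z = - g x z.
Proof.
have -> : - x = (-1)%:C *: x by rewrite rmorphN1 scaleN1r.
by rewrite formZl mulN1r.
Qed.

Lemma formBl x y z : g (x - y) z = g x z - g y z.
Proof. by rewrite formDl formNl. Qed.

Lemma formZr c x z : g z (c%:C *: x) = c * g z x.
Proof. by rewrite gsym formZl gsym. Qed.

Lemma formDr x y z : g z (x + y) = g z x + g z y.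
Proof. by rewrite gsym formDl !(gsym z). Qed.

Lemma formBr x y z : g z (x - y) = g z x - g z y.
Proof. by rewrite gsym formBl !(gsym z). Qed.

Lemma form_Cauchy_Schwarz : (forall x, 0 <= g x x) ->
  forall x y, g x y ^+ 2 <= g x x * g y y.
Proof.
move=> pos x y; apply: discriminant_le => // t.
have := pos (x + t%:C *: y).
by rewrite !(formDl, formDr, formZl, formZr) (gsym y x); lra.
Qed.

End RealForm.

Section InnerProductSpace.
Variables (R : realType) (V : lmodType R[i]) (ip : V -> V -> R[i]).
Hypothesis Hip : is_inner_product ip.

(* Everything below only uses the real part of [ip]: it is a real inner product on V
   inducing the norm [hnorm ip], and all the order conditions on effects are about it. *)
Definition rip x y := complex.Re (ip x y).
Local Notation hn := (hnorm ip).

Lemma rip_linear (c : R) x y z : rip (c%:C *: x + y) z = c * rip x z + rip y z.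
Proof.
case: Hip => ipl _ _ _; rewrite /rip ipl.
by case: (ip x z) => a b; case: (ip y z) => a' b' /=; rewrite mul0r subr0.
Qed.

Lemma ripC x y : rip x y = rip y x.
Proof. by case: Hip => _ ipC _ _; rewrite /rip ipC; case: (ip y x). Qed.

Lemma rip_ge0 x : 0 <= rip x x.
Proof. by case: Hip => _ _ ip_ge0 _; have := ip_ge0 x; rewrite lecE => /andP[]. Qed.

Lemma rip_eq0 x : rip x x = 0 -> x = 0.
Proof.
case: Hip => _ _ ip_ge0 ip_eq0 rip0; apply: ip_eq0.
by have := ger0_Im (ip_ge0 x); rewrite /rip in rip0; case: (ip x x) rip0 => a b /= -> ->.
Qed.

Lemma ipBl x y z : ip (x - y) z = ip x z - ip y z.
Proof. by case: Hip => ipl _ _ _; rewrite -scaleN1r addrC ipl mulN1r addrC. Qed.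

Lemma ipBr x y z : ip z (x - y) = ip z x - ip z y.
Proof. by case: Hip => _ ipC _ _; rewrite ipC ipBl rmorphB (ipC z x) (ipC z y). Qed.

Lemma rip0l z : rip 0 z = 0.
Proof. exact: (form0l rip_linear). Qed.

Lemma ripZl c x z : rip (c%:C *: x) z = c * rip x z.
Proof. exact: (formZl rip_linear). Qed.

Lemma ripZr c x z : rip z (c%:C *: x) = c * rip z x.
Proof. exact: (formZr rip_linear ripC). Qed.

Lemma ripDl x y z : rip (x + y) z = rip x z + rip y z.
Proof. exact: (formDl rip_linear). Qed.

Lemma ripDr x y z : rip z (x + y) = rip z x + rip z y.
Proof. exact: (formDr rip_linear ripC). Qed.

Lemma ripBl x y z : rip (x - y) z = rip x z - rip y z.
Proof. exact: (formBl rip_linear). Qed.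

Lemma ripBr x y z : rip z (x - y) = rip z x - rip z y.
Proof. exact: (formBr rip_linear ripC). Qed.

Lemma hnorm_ge0 x : 0 <= hn x. Proof. exact: sqrtr_ge0. Qed.

Lemma hnorm_sqr x : hn x ^+ 2 = rip x x. Proof. exact/sqr_sqrtr/rip_ge0. Qed.

Lemma hnorm0 : hn 0 = 0.
Proof. by rewrite /hnorm -/(rip 0 0) rip0l sqrtr0. Qed.

Lemma hnorm_le0 x : hn x <= 0 -> x = 0.
Proof.
move=> hx; apply: rip_eq0; rewrite -hnorm_sqr.
have -> : hn x = 0 by apply/eqP; rewrite eq_le hx hnorm_ge0.
by rewrite expr0n.
Qed.

Lemma hnorm_gt0 x : x != 0 -> 0 < hn x.
Proof. by apply: contraNT; rewrite -leNgt => /hnorm_le0 ->. Qed.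

Lemma hnormZ c x : hn (c%:C *: x) = `|c| * hn x.
Proof.
rewrite /hnorm -!/(rip _ _) ripZl ripZr mulrA -expr2.
by rewrite sqrtrM ?sqr_ge0 // sqrtr_sqr.
Qed.

Lemma hnormN x : hn (- x) = hn x.
Proof. by rewrite -scaleN1r -(rmorphN1 (real_complex R)) hnormZ normrN1 mul1r. Qed.

Lemma rip_Cauchy_Schwarz x y : rip x y ^+ 2 <= rip x x * rip y y.
Proof. exact: (form_Cauchy_Schwarz rip_linear ripC rip_ge0). Qed.

Lemma rip_le_hnorm x y : rip x y <= hn x * hn y.
Proof.
have := rip_Cauchy_Schwarz x y.
rewrite -!hnorm_sqr -exprMn; have := mulr_ge0 (hnorm_ge0 x) (hnorm_ge0 y).
by move: (hn x * hn y) => n; nra.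
Qed.

Lemma hnormD x y : hn (x + y) <= hn x + hn y.
Proof.
rewrite -ler_sqr ?nnegrE ?addr_ge0 ?hnorm_ge0 // hnorm_sqr ripDl !ripDr (ripC y x).
by rewrite -!hnorm_sqr; have := rip_le_hnorm x y; lra.
Qed.

Lemma hnormB x y : hn (x - y) <= hn x + hn y.
Proof. by rewrite -(hnormN y); apply: hnormD. Qed.

Section LinearOp.
Variable T : V -> V.
Hypothesis linT : is_linear_op T.

Lemma linear_op0 : T 0 = 0.
Proof. by have := linT (-1) 0 0; rewrite scaler0 addr0 scaleN1r addNr. Qed.

Lemma linear_opZ c x : T (c *: x) = c *: T x.
Proof. by have := linT c x 0; rewrite !addr0 linear_op0 addr0. Qed.

Lemma linear_opD x y : T (x + y) = T x + T y.
Proof. by have := linT 1 x y; rewrite !scale1r. Qed.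

Lemma linear_opB x y : T (x - y) = T x - T y.
Proof. by rewrite linear_opD -scaleN1r linear_opZ scaleN1r. Qed.

End LinearOp.

Lemma hnorm_le_opnorm T x : bounded_op ip T -> hn x <= 1 -> hn (T x) <= opnorm ip T.
Proof.
case=> _ [M boundM] hx; apply: ub_le_sup; last by exists x.
exists `|M| => _ [y hy <-]; apply: (le_trans (boundM y)).
by have := hnorm_ge0 y; have := ler_norm M; have := normr_ge0 M; rewrite /= in hy; nra.
Qed.

Lemma opnorm_le T K : 0 <= K -> (forall x, hn (T x) <= K * hn x) -> opnorm ip T <= K.
Proof.
move=> K_ge0 boundK; apply: ge_sup.
  by exists (hn (T 0)), 0; rewrite //= hnorm0.
move=> _ [x hx <-]; apply: (le_trans (boundK x)).
by rewrite /= in hx; nra.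
Qed.

Lemma opnorm_ge0 T : bounded_op ip T -> 0 <= opnorm ip T.
Proof.
move=> bT; apply: le_trans (hnorm_le_opnorm (x := 0) bT _); first exact: hnorm_ge0.
by rewrite hnorm0 ler01.
Qed.

Lemma opnorm_ge_ratio T z : bounded_op ip T -> z != 0 -> hn (T z) / hn z <= opnorm ip T.
Proof.
move=> bT z_neq0; have z_gt0 := hnorm_gt0 z_neq0.
have := hnorm_le_opnorm (x := (hn z)^-1%:C *: z) bT.
rewrite (linear_opZ (proj1 bT)) !hnormZ gtr0_norm ?invr_gt0 // mulVf ?gt_eqF //.
by rewrite mulrC; apply.
Qed.

Lemma hnorm_op_le T x : bounded_op ip T -> hn (T x) <= opnorm ip T * hn x.
Proof.
move=> bT; have [-> | x_neq0] := eqVneq x 0.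
  by rewrite (linear_op0 (proj1 bT)) hnorm0 mulr0.
by rewrite -ler_pdivrMr ?hnorm_gt0 // opnorm_ge_ratio.
Qed.

Lemma opnorm_ge1_fixed T z : bounded_op ip T -> T z = z -> z != 0 -> 1 <= opnorm ip T.
Proof.
move=> bT Tz z_neq0; have := opnorm_ge_ratio bT z_neq0.
by rewrite Tz divff // gt_eqF ?hnorm_gt0.
Qed.

Lemma rip_op_le_opnorm T x : bounded_op ip T -> rip (T x) x <= opnorm ip T * rip x x.
Proof.
move=> bT; apply: le_trans (rip_le_hnorm _ _) _; rewrite -hnorm_sqr expr2 mulrA.
by apply: ler_wpM2r; [exact: hnorm_ge0 | exact: hnorm_op_le].
Qed.

Lemma bounded_op_scalar (c : R) : bounded_op ip (fun x => c%:C *: x).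
Proof.
split=> [a x y | ]; first by rewrite scalerDr !scalerA mulrC.
by exists `|c| => x; rewrite hnormZ.
Qed.

Lemma opnorm_scalar (c : R) : 0 <= c -> (exists x : V, x != 0) ->
  opnorm ip (fun x => c%:C *: x) = c.
Proof.
move=> c_ge0 [z z_neq0]; apply/eqP; rewrite eq_le; apply/andP; split.
  by apply: opnorm_le => // x; rewrite hnormZ ger0_norm.
have := opnorm_ge_ratio (bounded_op_scalar c) z_neq0.
by rewrite hnormZ ger0_norm // mulfK // gt_eqF ?hnorm_gt0.
Qed.

Lemma opnorm_eq0 T : bounded_op ip T -> opnorm ip T = 0 <-> forall x, T x = 0.
Proof.
move=> bT; split=> [T0 x | T0].
  by apply: hnorm_le0; have := hnorm_op_le x bT; rewrite T0 mul0r.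
apply/eqP; rewrite eq_le opnorm_ge0 // andbT.
by apply: opnorm_le => // x; rewrite T0 hnorm0 mul0r.
Qed.

Lemma bounded_op_id : bounded_op ip (@idop R V).
Proof. by split=> [a x y | ] //; exists 1 => x; rewrite mul1r. Qed.

Lemma bounded_opB S T : bounded_op ip S -> bounded_op ip T ->
  bounded_op ip (fun x => S x - T x).
Proof.
move=> bS bT; split=> [a x y | ].
  by rewrite (proj1 bS) (proj1 bT) scalerBr opprD addrACA.
exists (opnorm ip S + opnorm ip T) => x; rewrite mulrDl.
by apply: le_trans (hnormB _ _) _; apply: lerD; apply: hnorm_op_le.
Qed.

Lemma hnorm_comp_le S T x : bounded_op ip S -> bounded_op ip T ->
  hn (S (T x)) <= opnorm ip S * opnorm ip T * hn x.
Proof.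
move=> bS bT; apply: le_trans (hnorm_op_le _ bS) _; rewrite -mulrA.
by apply: ler_wpM2l; [exact: opnorm_ge0 | exact: hnorm_op_le].
Qed.

Lemma bounded_op_comp S T : bounded_op ip S -> bounded_op ip T ->
  bounded_op ip (fun x => S (T x)).
Proof.
move=> bS bT; split=> [a x y | ]; first by rewrite (proj1 bT) (proj1 bS).
by exists (opnorm ip S * opnorm ip T) => x; apply: hnorm_comp_le.
Qed.

Lemma opnorm_comp_le S T : bounded_op ip S -> bounded_op ip T ->
  opnorm ip (fun x => S (T x)) <= opnorm ip S * opnorm ip T.
Proof.
move=> bS bT; apply: opnorm_le => [|x]; last exact: hnorm_comp_le.
by rewrite mulr_ge0 ?opnorm_ge0.
Qed.

Lemma opnorm_lipschitz S T c : bounded_op ip S -> bounded_op ip T -> 0 <= c ->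
  (forall x, hn (S x - T x) <= c * hn x) -> `|opnorm ip S - opnorm ip T| <= c.
Proof.
move=> bS bT c_ge0 STc.
have le_add U W : bounded_op ip W -> (forall x, hn (U x - W x) <= c * hn x) ->
    opnorm ip U <= opnorm ip W + c.
  move=> bW UWc; apply: opnorm_le => [|x]; first by rewrite addr_ge0 ?opnorm_ge0.
  rewrite -(subrKC (W x) (U x)) mulrDl.
  by apply: le_trans (hnormD _ _) _; apply: lerD; [exact: hnorm_op_le | exact: UWc].
have TSc x : hn (T x - S x) <= c * hn x by rewrite -opprB hnormN.
have := le_add S T bT STc; have := le_add T S bS TSc.
by rewrite ler_norml; lra.
Qed.

Definition rselfadjoint (T : V -> V) := forall x y, rip (T x) y = rip x (T y).

Lemma selfadjoint_rselfadjoint T : selfadjoint ip T -> rselfadjoint T.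
Proof. by move=> saT x y; rewrite /rip saT. Qed.

Section PositiveOp.
Variable T : V -> V.
Hypotheses (linT : is_linear_op T) (saT : rselfadjoint T).
Hypothesis T_ge0 : forall x, 0 <= rip (T x) x.

Lemma rip_op_linear (c : R) x y z :
  rip (T (c%:C *: x + y)) z = c * rip (T x) z + rip (T y) z.
Proof. by rewrite linT rip_linear. Qed.

Lemma rip_opC x y : rip (T x) y = rip (T y) x.
Proof. by rewrite saT ripC. Qed.

Lemma rip_op_Cauchy_Schwarz x y : rip (T x) y ^+ 2 <= rip (T x) x * rip (T y) y.
Proof. exact: (form_Cauchy_Schwarz rip_op_linear rip_opC T_ge0). Qed.

(* Cauchy-Schwarz for the form <T.,.> at (x, Tx): ||Tx||^4 <= <Tx,x> <T^2 x,Tx>. *)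
Lemma hnorm_psd_le K x : 0 <= K -> (forall y, rip (T y) y <= K * rip y y) ->
  hn (T x) <= K * hn x.
Proof.
move=> K_ge0 TK.
rewrite -ler_sqr ?nnegrE ?mulr_ge0 ?hnorm_ge0 // exprMn !hnorm_sqr.
have CS := rip_op_Cauchy_Schwarz x (T x).
have := TK x; have := TK (T x); have := T_ge0 x; have := T_ge0 (T x).
have := rip_ge0 (T x); have := rip_ge0 x.
move: CS; set a := rip (T x) (T x); set s := rip x x.
move: (rip (T x) x) (rip (T (T x)) (T x)) => p q CS *.
have : a ^+ 2 <= K ^+ 2 * s * a by apply: le_trans CS _; nra.
have : 0 <= K ^+ 2 * s by rewrite mulr_ge0 ?sqr_ge0.
move: (K ^+ 2 * s) => b; nra.
Qed.

End PositiveOp.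

Lemma rselfadjoint_form_scalar T (c : R) : is_linear_op T -> rselfadjoint T ->
  (forall x, rip (T x) x = c * rip x x) -> forall x, T x = c%:C *: x.
Proof.
move=> linT saT Tc.
pose U x := T x - c%:C *: x.
have linU : is_linear_op U.
  by move=> a x y; rewrite /U linT scalerDr scalerBr !scalerA mulrC opprD addrACA.
have saU : rselfadjoint U by move=> x y; rewrite /U ripBl ripBr ripZl ripZr saT.
have U0 x : rip (U x) x = 0 by rewrite /U ripBl ripZl Tc subrr.
have U_ge0 x : 0 <= rip (U x) x by rewrite U0.
have U_le0 x : rip (U x) x <= 0 * rip x x by rewrite U0 mul0r.
move=> x; apply/eqP; rewrite -subr_eq0; apply/eqP/hnorm_le0.
by have := hnorm_psd_le linU saU U_ge0 x (lexx 0) U_le0; rewrite mul0r.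
Qed.

Section Effect.
Variable A : V -> V.
Hypothesis effA : effect ip A.

Lemma effect_bounded : bounded_op ip A. Proof. by case: effA. Qed.

Lemma effect_linear : is_linear_op A. Proof. exact: proj1 effect_bounded. Qed.

Lemma effect_rselfadjoint : rselfadjoint A.
Proof. by case: effA => _ /selfadjoint_rselfadjoint. Qed.

Lemma effect_rip_ge0 x : 0 <= rip (A x) x.
Proof. by case: effA => _ _ /(_ x) [+ _]; rewrite lecE => /andP[]. Qed.

Lemma effect_rip_le x : rip (A x) x <= rip x x.
Proof. by case: effA => _ _ /(_ x) [_ +]; rewrite lecE => /andP[]. Qed.

Lemma effect_hnorm_le x : hn (A x) <= hn x.
Proof.
rewrite -[hn x]mul1r.
apply: hnorm_psd_le effect_linear effect_rselfadjoint effect_rip_ge0 _ _ ler01 _ => y.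
by rewrite mul1r effect_rip_le.
Qed.

Lemma effect_opnorm_ge0 : 0 <= opnorm ip A.
Proof. exact: opnorm_ge0 effect_bounded. Qed.

Lemma effect_opnorm_le1 : opnorm ip A <= 1.
Proof.
by apply: opnorm_le => [|x]; rewrite ?mul1r ?ler01 ?effect_hnorm_le.
Qed.

(* Cauchy-Schwarz for <A.,.> at (x, Ax), with <A^2 x, Ax> <= ||Ax||^2. *)
Lemma effect_rip_sqr_le x : rip (A x) (A x) <= rip (A x) x.
Proof.
have CS := rip_op_Cauchy_Schwarz effect_linear effect_rselfadjoint effect_rip_ge0 x (A x).
have := effect_rip_le (A x); have := effect_rip_ge0 x; have := rip_ge0 (A x).
move: CS; set b := rip (A x) (A x).
by move: (rip (A x) x) (rip (A (A x)) (A x)) => a q; nra.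
Qed.

End Effect.

Lemma complop_effect A : effect ip A -> effect ip (complop A).
Proof.
move=> effA; split.
- exact: bounded_opB bounded_op_id (effect_bounded effA).
- by case: effA => _ saA _ x y; rewrite /complop ipBl ipBr saA.
- move=> x; rewrite /complop ipBl subr_ge0 gerBl.
  by case: effA => _ _ /(_ x) [].
Qed.

Lemma complopK (A : V -> V) : complop (complop A) = A.
Proof. by apply: funext => x; rewrite /complop subKr. Qed.

Definition mulcompl (A : V -> V) : V -> V := fun x => A (complop A x).

Section EffectDefect.
Variable A : V -> V.
Hypothesis effA : effect ip A.

Lemma mulcomplE x : mulcompl A x = A x - A (A x).
Proof. by rewrite /mulcompl /complop (linear_opB (effect_linear effA)). Qed.

Lemma mulcompl_bounded : bounded_op ip (mulcompl A).
Proof.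
exact: bounded_op_comp (effect_bounded effA) (effect_bounded (complop_effect effA)).
Qed.

Lemma mulcompl_rselfadjoint : rselfadjoint (mulcompl A).
Proof.
have saA := effect_rselfadjoint effA.
by move=> x y; rewrite !mulcomplE ripBl ripBr !saA.
Qed.

Lemma rip_mulcompl x : rip (mulcompl A x) x = rip (A x) x - rip (A x) (A x).
Proof. by rewrite mulcomplE ripBl (effect_rselfadjoint effA (A x)). Qed.

Lemma rip_mulcompl_ge0 x : 0 <= rip (mulcompl A x) x.
Proof. by rewrite rip_mulcompl subr_ge0 (effect_rip_sqr_le effA). Qed.

Lemma opnorm_mulcompl_le : opnorm ip (mulcompl A) <= opnorm ip A * opnorm ip (complop A).
Proof.
exact: opnorm_comp_le (effect_bounded effA) (effect_bounded (complop_effect effA)).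
Qed.

End EffectDefect.

Lemma S0_ge0_le1 A : effect ip A -> 0 <= S0 ip A <= 1.
Proof.
move=> effA; have effA' := complop_effect effA.
have := opnorm_mulcompl_le effA; have := opnorm_ge0 (mulcompl_bounded effA).
have := effect_opnorm_le1 effA; have := effect_opnorm_le1 effA'.
have := effect_opnorm_ge0 effA; have := effect_opnorm_ge0 effA'.
by rewrite /S0 -/(mulcompl A); nra.
Qed.

Lemma S0_complop A : effect ip A -> S0 ip (complop A) = S0 ip A.
Proof.
move=> effA; rewrite /S0 complopK mulrC; congr (_ - opnorm ip _).
by apply: funext => x; rewrite /complop (linear_opB (effect_linear effA)).
Qed.

Lemma S0_eq1 A : effect ip A -> S0 ip A = 1 <-> nontrivial_projection ip A.
Proof.
move=> effA; have effA' := complop_effect effA; have bP := mulcompl_bounded effA.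
have linA := effect_linear effA.
have le1 := effect_opnorm_le1 effA; have le1' := effect_opnorm_le1 effA'.
have := opnorm_mulcompl_le effA; have := opnorm_ge0 bP.
have := effect_opnorm_ge0 effA; have := effect_opnorm_ge0 effA'.
rewrite /S0 -/(mulcompl A); split=> [S01 | [_ idemA saA A_neq0 A_neqI]].
- have P0 : opnorm ip (mulcompl A) = 0 by nra.
  have M1 : opnorm ip A = 1 by nra.
  have m1 : opnorm ip (complop A) = 1 by nra.
  split=> //; first exact: effect_bounded effA.
  + move=> x; apply/eqP; rewrite eq_sym -subr_eq0 -(mulcomplE effA).
    by apply/eqP; move: x; apply/opnorm_eq0.
  + by case: effA.
  + move=> A0; have : opnorm ip A = 0.
      by apply/(opnorm_eq0 (effect_bounded effA)) => x; rewrite A0.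
    by rewrite M1; apply/eqP; rewrite oner_eq0.
  + move=> AI; have : opnorm ip (complop A) = 0.
      by apply/(opnorm_eq0 (effect_bounded effA')) => x; rewrite /complop AI subrr.
    by rewrite m1; apply/eqP; rewrite oner_eq0.
have [y /eqP Ay_neq0] : exists y, A y <> 0.
  by apply/existsNP => A0; apply: A_neq0; apply: funext.
have [z /eqP Az_neqz] : exists z, A z <> z.
  by apply/existsNP => A1; apply: A_neqI; apply: funext.
have M_ge1 : 1 <= opnorm ip A.
  exact: opnorm_ge1_fixed (effect_bounded effA) (idemA y) Ay_neq0.
have m_ge1 : 1 <= opnorm ip (complop A).
  apply: (opnorm_ge1_fixed (z := z - A z) (effect_bounded effA')).
    by rewrite /complop (linear_opB linA) idemA subrr subr0.
  by rewrite subr_eq0 eq_sym.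
have -> : opnorm ip (mulcompl A) = 0.
  by apply/(opnorm_eq0 bP) => x; rewrite (mulcomplE effA) idemA subrr.
by nra.
Qed.

Lemma opnorm_mulcompl_harmonic A : effect ip A ->
  opnorm ip (mulcompl A) * (opnorm ip A + opnorm ip (complop A)) <=
  opnorm ip A * opnorm ip (complop A).
Proof.
move=> effA; have effA' := complop_effect effA.
have M_ge0 := effect_opnorm_ge0 effA; have m_ge0 := effect_opnorm_ge0 effA'.
set M := opnorm ip A in M_ge0 *; set m := opnorm ip (complop A) in m_ge0 *.
have [-> | Mm_neq0] := eqVneq (M + m) 0; first by rewrite mulr0 mulr_ge0.
have Mm_gt0 : 0 < M + m by rewrite lt_def Mm_neq0 addr_ge0.
have K_ge0 : 0 <= M * m / (M + m) by rewrite divr_ge0 ?mulr_ge0 ?addr_ge0.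
rewrite -ler_pdivlMr //.
apply: opnorm_le => // x.
apply: (hnorm_psd_le (proj1 (mulcompl_bounded effA)) (mulcompl_rselfadjoint effA)
  (rip_mulcompl_ge0 effA) x K_ge0) => y.
rewrite (rip_mulcompl effA) mulrAC ler_pdivlMr //.
apply: harmonic_form_bound; rewrite ?rip_ge0 ?effect_rip_ge0 ?effect_rip_sqr_le //.
- exact: rip_op_le_opnorm (effect_bounded effA).
- by have := rip_op_le_opnorm y (effect_bounded effA'); rewrite /complop ripBl.
- exact: rip_Cauchy_Schwarz.
Qed.

Lemma trivial_effect_S0 A : trivial_effect A -> S0 ip A = 0.
Proof.
case=> l [/andP[l_ge0 l_le1] ->]; rewrite /S0 /complop.
have -> : (fun x : V => x - l%:C *: x) = (fun x => (1 - l)%:C *: x).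
  by apply: funext => x; rewrite rmorphB rmorph1 scalerBl scale1r.
have -> : (fun x : V => l%:C *: (x - l%:C *: x)) = (fun x => (l * (1 - l))%:C *: x).
  by apply: funext => x; rewrite rmorphM rmorphB rmorph1 -scalerA scalerBl scale1r.
have [V_neq0 | V0] := pselect (exists x : V, x != 0).
  by rewrite !opnorm_scalar ?subr_ge0 ?mulr_ge0 ?subr_ge0 // subrr.
have opnorm0 c : opnorm ip (fun x => c%:C *: x) = 0.
  apply/(opnorm_eq0 (bounded_op_scalar c)) => x.
  have -> : x = 0 by apply/eqP; apply: contra_notT V0 => x_neq0; exists x.
  exact: scaler0.
by rewrite !opnorm0 mulr0 subrr.
Qed.

Lemma S0_eq0 A : effect ip A -> S0 ip A = 0 <-> trivial_effect A.
Proof.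
move=> effA; split=> [S00 | ]; last exact: trivial_effect_S0.
have effA' := complop_effect effA; have harm := opnorm_mulcompl_harmonic effA.
move/eqP: S00; rewrite /S0 -/(mulcompl A) subr_eq0 => /eqP P_eq; rewrite -P_eq in harm.
have M_ge0 := effect_opnorm_ge0 effA; have m_ge0 := effect_opnorm_ge0 effA'.
have M_le1 := effect_opnorm_le1 effA; have m_le1 := effect_opnorm_le1 effA'.
set M := opnorm ip A in harm M_ge0 M_le1 *.
set m := opnorm ip (complop A) in harm m_ge0 m_le1 *.
have sum_le1 : M + m <= 1.
  have [/eqP | Mm_neq0] := eqVneq (M * m) 0.
    by rewrite mulf_eq0 => /orP[] /eqP Mm0; rewrite Mm0; lra.
  have Mm_gt0 : 0 < M * m by rewrite lt_def Mm_neq0 mulr_ge0.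
  by rewrite -(ler_pM2l Mm_gt0) mulr1.
have formA x : rip (A x) x = M * rip x x.
  apply/eqP; rewrite eq_le (rip_op_le_opnorm _ (effect_bounded effA)) /=.
  have := rip_op_le_opnorm x (effect_bounded effA'); rewrite /complop ripBl -/m.
  by have := rip_ge0 x; nra.
exists M; split; first by rewrite M_ge0 /=; lra.
apply: funext => x.
exact: rselfadjoint_form_scalar (effect_linear effA) (effect_rselfadjoint effA) formA x.
Qed.

Lemma hnorm_pow2_le T k x : is_linear_op T -> rselfadjoint T ->
  hn (T x) ^+ (2 ^ k) <= hn (iter (2 ^ k) T x) * hn x ^+ (2 ^ k - 1).
Proof.
elim: k T => [|k IHk] T linT saT; first by rewrite expn0 subnn expr0 mulr1 expr1.
have sqr_le : hn (T x) ^+ 2 <= hn (T (T x)) * hn x.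
  by rewrite hnorm_sqr saT ripC rip_le_hnorm.
have lin2 : is_linear_op (fun y => T (T y)) by move=> a y z; rewrite !linT.
have sa2 : rselfadjoint (fun y => T (T y)) by move=> y z; rewrite !saT.
have := IHk _ lin2 sa2.
have -> : iter (2 ^ k) (fun y => T (T y)) x = iter (2 ^ k.+1) T x.
  by rewrite expnS mul2n; elim: (2 ^ k)%N => //= n ->.
move=> IH; rewrite expnS exprM.
apply: le_trans (_ : (hn (T (T x)) * hn x) ^+ (2 ^ k) <= _).
  by apply: lerXn2r; rewrite ?nnegrE ?exprn_ge0 ?mulr_ge0 ?hnorm_ge0.
have -> : (2 * 2 ^ k - 1 = (2 ^ k - 1) + 2 ^ k)%N by have := expn_gt0 2 k; lia.
by rewrite exprMn exprD mulrA ler_wpM2r ?exprn_ge0 ?hnorm_ge0 // -expnS.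
Qed.

Lemma hnorm_iter_le T n x : bounded_op ip T -> hn (iter n T x) <= opnorm ip T ^+ n * hn x.
Proof.
move=> bT; elim: n => [|n IHn] /=; first by rewrite expr0 mul1r.
apply: le_trans (hnorm_op_le _ bT) _; rewrite exprS -mulrA.
by apply: ler_wpM2l; [exact: opnorm_ge0 | exact: IHn].
Qed.

(* By hnorm_pow2_le and T'^(2^k) = C T^(2^k) D, ||T'x||^(2^k) is at most
   ||C|| ||D|| (||T|| ||x||)^(2^k); the constant ||C|| ||D|| disappears in the 2^k-th root. *)
Lemma opnorm_similar_le T T' C D : bounded_op ip T -> is_linear_op T' -> rselfadjoint T' ->
  bounded_op ip C -> bounded_op ip D -> cancel C D -> cancel D C ->
  (forall x, T' x = C (T (D x))) -> opnorm ip T' <= opnorm ip T.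
Proof.
move=> bT linT' saT' bC bD CK DK T'E.
apply: opnorm_le => [|x]; first exact: opnorm_ge0.
apply: (le_of_pow2_le (K := opnorm ip C * opnorm ip D)) => [||k].
- exact: hnorm_ge0.
- by rewrite mulr_ge0 ?hnorm_ge0 ?opnorm_ge0.
apply: le_trans (hnorm_pow2_le k x linT' saT') _.
rewrite (iter_conj CK DK T'E) exprMn.
set n := (2 ^ k)%N; have n_gt0 : (0 < n)%N by rewrite expn_gt0.
have -> : hn x ^+ n = hn x * hn x ^+ (n - 1) by rewrite -exprS subn1 prednK.
have -> : opnorm ip C * opnorm ip D * (opnorm ip T ^+ n * (hn x * hn x ^+ (n - 1))) =
    opnorm ip C * (opnorm ip T ^+ n * (opnorm ip D * hn x)) * hn x ^+ (n - 1) by ring.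
rewrite ler_wpM2r ?exprn_ge0 ?hnorm_ge0 //.
apply: le_trans (hnorm_op_le _ bC) _; rewrite ler_wpM2l ?opnorm_ge0 //.
apply: le_trans (hnorm_iter_le _ _ bT) _; rewrite ler_wpM2l ?exprn_ge0 ?opnorm_ge0 //.
exact: hnorm_op_le.
Qed.

Lemma opnorm_similar T T' C D : bounded_op ip T -> bounded_op ip T' ->
  rselfadjoint T -> rselfadjoint T' -> bounded_op ip C -> bounded_op ip D ->
  cancel C D -> cancel D C -> (forall x, T' x = C (T (D x))) -> opnorm ip T' = opnorm ip T.
Proof.
move=> bT bT' saT saT' bC bD CK DK T'E; apply/eqP; rewrite eq_le.
rewrite (opnorm_similar_le bT (proj1 bT') saT' bC bD CK DK T'E) /=.
by apply: (opnorm_similar_le bT' (proj1 bT) saT bD bC DK CK) => x; rewrite T'E !CK.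
Qed.

Lemma S0_similar A C D : effect ip A -> invertible_op ip C D ->
  effect ip (fun x => C (A (D x))) -> S0 ip (fun x => C (A (D x))) = S0 ip A.
Proof.
move=> effA [bC bD DK CK] effB; set B := fun x => C (A (D x)) in effB *.
have effA' := complop_effect effA; have effB' := complop_effect effB.
have similar T T' : effect ip T -> effect ip T' -> (forall x, T' x = C (T (D x))) ->
    opnorm ip T' = opnorm ip T.
  move=> effT effT'; apply: (opnorm_similar (effect_bounded effT) (effect_bounded effT')
    (effect_rselfadjoint effT) (effect_rselfadjoint effT') bC bD CK DK).
rewrite /S0 (similar A B) // (similar (complop A) (complop B)) //; last first.
  by move=> x; rewrite /complop (linear_opB (proj1 bC)) DK.
congr (_ - _); apply: (opnorm_similar (mulcompl_bounded effA) (mulcompl_bounded effB)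
  (mulcompl_rselfadjoint effA) (mulcompl_rselfadjoint effB) bC bD CK DK) => x.
by rewrite /mulcompl /complop /B (linear_opB (proj1 bD)) CK.
Qed.

Lemma S0_lipschitz A B c : effect ip A -> effect ip B -> 0 <= c ->
  (forall x, hn (B x - A x) <= c * hn x) -> `|S0 ip B - S0 ip A| <= 5%:R * c.
Proof.
move=> effA effB c_ge0 BAc.
have effA' := complop_effect effA; have effB' := complop_effect effB.
have linB := effect_linear effB.
have dM := opnorm_lipschitz (effect_bounded effB) (effect_bounded effA) c_ge0 BAc.
have dm : `|opnorm ip (complop B) - opnorm ip (complop A)| <= c.
  apply: opnorm_lipschitz (effect_bounded effB') (effect_bounded effA') c_ge0 _ => x.
  by rewrite /complop opprB addrC addrA subrK -opprB hnormN.
have dP : `|opnorm ip (mulcompl B) - opnorm ip (mulcompl A)| <= 3%:R * c.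
  apply: opnorm_lipschitz (mulcompl_bounded effB) (mulcompl_bounded effA) _ _ => [|x].
    by rewrite mulr_ge0 ?ler0n.
  have -> : mulcompl B x - mulcompl A x =
      (B x - A x) - (B (B x - A x) + (B (A x) - A (A x))).
    rewrite (mulcomplE effB) (mulcomplE effA) (linear_opB linB) addrA subrK.
    by rewrite !opprD !opprK addrACA.
  have -> : 3%:R * c * hn x = c * hn x + (c * hn x + c * hn x) by ring.
  apply: le_trans (hnormB _ _) _; rewrite lerD ?BAc //.
  apply: le_trans (hnormD _ _) _; apply: lerD.
    exact: le_trans (effect_hnorm_le effB _) (BAc x).
  by apply: le_trans (BAc _) _; rewrite ler_wpM2l ?effect_hnorm_le.
have := effect_opnorm_le1 effA; have := effect_opnorm_le1 effA'.
have := effect_opnorm_le1 effB; have := effect_opnorm_le1 effB'.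
have := effect_opnorm_ge0 effA; have := effect_opnorm_ge0 effA'.
have := effect_opnorm_ge0 effB; have := effect_opnorm_ge0 effB'.
move: dM dm dP; rewrite /S0 -/(mulcompl A) -/(mulcompl B) !ler_norml.
nra.
Qed.

Lemma S0_continuous A : effect ip A -> forall e : R, 0 < e -> exists d : R, 0 < d /\
  forall B, effect ip B -> opnorm ip (fun x => B x - A x) < d -> `|S0 ip B - S0 ip A| < e.
Proof.
move=> effA e e_gt0; exists (e / 5%:R); split=> [|B effB BA_lt]; first by rewrite divr_gt0.
have bBA := bounded_opB (effect_bounded effB) (effect_bounded effA).
apply: le_lt_trans (S0_lipschitz effA effB (opnorm_ge0 bBA) (fun x => hnorm_op_le x bBA)) _.
by rewrite mulrC -ltr_pdivlMr.
Qed.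

End InnerProductSpace.

Theorem mainTheorem2 (R : realType) (V : lmodType (R[i])) (ip : V -> V -> R[i])
  (Hip : is_inner_product ip) (Hcomplete : hcomplete ip) (Hsep : hseparable ip) :
  sharpness_measure ip (S0 ip).
Proof.
split; first exact: S0_ge0_le1.
split; first exact: S0_eq0.
split; first exact: S0_eq1.
split; first exact: S0_complop.
split; first exact: S0_similar.
exact: S0_continuous.
Qed.
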